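(* Let $n\geq 2$, $w=w_1\cdots w_n\in\mathfrak{S}_n$, $i\in\{1,\dots,n\}$ and $1\leq k\leq n-1$. Then $w_i$ is a $k$-peak of $w$ if and only if both of the following hold: (1) if there is $s>i$ with $w_s>w_i$, then there is $j$ with $i<j\leq s$ and $w_i-w_j\geq k$; (2) if there is $s<i$ with $w_s>w_i$, then there is $j$ with $s\leq j<i$ and $w_i-w_j\geq k$.
   Context: $\mathfrak{S}_n$ is the set of permutations $w=w_1\cdots w_n$ of $\{1,\dots,n\}$. A section of $w$ is a consecutive block $w_s\cdots w_t$ ($s\le t$). A section $w_s\cdots w_t$ is a $k$-up if $s<t$ and $w_t-w_s\geq k$, and a $k$-down if $s<t$ and $w_s-w_t\geq k$; a $k$-up/$k$-down ''in'' $w_a\cdots w_b$ means one $w_s\cdots w_t$ with $a\le s<t\le b$. A section $w_i\cdots w_j$ ($i<j$) is $k$-ascending if $w_i=\min\{w_i,\dots,w_j\}$, $w_j=\max\{w_i,\dots,w_j\}$, $w_j-w_i\geq k$, and there is no $k$-down in it; it is $k$-descending if $w_i=\max$, $w_j=\min$ of $\{w_i,\dots,w_j\}$, $w_i-w_j\geq k$, and there is no $k$-up in it. Such a section is maximal if not contained in another section of the same type. An entry $w_i$ is a $k$-peak of $w$ if it is the last entry of a maximal $k$-ascending section or the first entry of a maximal $k$-descending section. *)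

(* Permutations of {1..n} are modelled as 'S_n = {perm 'I_n}:
   positions and values are 0-based (w_{i+1} = (w i) + 1); all statements only
   involve order comparisons and differences, which are shift invariant. *)
From mathcomp Require Import all_boot all_fingroup.
Set Implicit Arguments. Unset Strict Implicit. Unset Printing Implicit Defensive.

Section KPeak.
Variable n : nat.
Implicit Types (w : 'S_n) (s t i j : 'I_n) (k : nat).

(* w_t - w_s >= k, i.e. w_s + k <= w_t (avoids truncated subtraction). *)
Definition kup w k s t : Prop := (s < t)%N /\ (w s + k <= w t)%N.
Definition kdown w k s t : Prop := (s < t)%N /\ (w t + k <= w s)%N.

Definition kascending w k i j : Prop :=
  [/\ (i < j)%N,
      (forall m : 'I_n, (i <= m <= j)%N -> (w i <= w m)%N /\ (w m <= w j)%N),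
      (w i + k <= w j)%N &
      ~ (exists s t : 'I_n, (i <= s)%N /\ (t <= j)%N /\ kdown w k s t)].

Definition kdescending w k i j : Prop :=
  [/\ (i < j)%N,
      (forall m : 'I_n, (i <= m <= j)%N -> (w j <= w m)%N /\ (w m <= w i)%N),
      (w j + k <= w i)%N &
      ~ (exists s t : 'I_n, (i <= s)%N /\ (t <= j)%N /\ kup w k s t)].

Definition max_kascending w k i j : Prop :=
  kascending w k i j /\
  ~ (exists i' j' : 'I_n, (i' <= i)%N /\ (j <= j')%N /\ (i', j') <> (i, j)
                          /\ kascending w k i' j').
Definition max_kdescending w k i j : Prop :=
  kdescending w k i j /\
  ~ (exists i' j' : 'I_n, (i' <= i)%N /\ (j <= j')%N /\ (i', j') <> (i, j)
                          /\ kdescending w k i' j').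

Definition kpeak w k i : Prop :=
  (exists j, max_kascending w k j i) \/ (exists j, max_kdescending w k i j).
End KPeak.

(* If w_i ends a maximal k-ascending section w_j..w_i, condition (2) is witnessed
   by w_j, and a violation of (1) would let the section be extended up to the first
   later entry exceeding w_i, contradicting maximality.  Conversely, (1) and (2)
   force an entry w_p <= w_i - k (look at the position of the largest value).  If
   p < i, the last such p before i starts a k-ascending section ending at w_i; by
   (1) no k-ascending section containing it ends after i, so the one with the
   leftmost start is maximal.  Reading w backwards exchanges k-ascending with
   k-descending sections and (1) with (2), which handles p > i and the
   k-descending half of the definition of a k-peak. *)

From mathcomp Require Import all_boot all_fingroup zify.
From Stdlib Require Import Classical Wf_nat.
Set Implicit Arguments. Unset Strict Implicit. Unset Printing Implicit Defensive.

Definition kdrop_right n (w : 'S_n) k (i : 'I_n) : Prop :=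
  forall s : 'I_n, (i < s)%N -> (w i < w s)%N ->
    exists j : 'I_n, (i < j <= s)%N /\ (w j + k <= w i)%N.

Definition kdrop_left n (w : 'S_n) k (i : 'I_n) : Prop :=
  forall s : 'I_n, (s < i)%N -> (w i < w s)%N ->
    exists j : 'I_n, (s <= j < i)%N /\ (w j + k <= w i)%N.

Section Ascending.
Variables (n : nat) (w : 'S_n) (k : nat).
Implicit Types (i j p s t : 'I_n).

Lemma perm_ltn_of_leq (a b : 'I_n) : a != b -> (w a <= w b)%N -> (w a < w b)%N.
Proof.
move=> ab; rewrite leq_eqVlt => /orP[/eqP wab|//].
by move: ab; rewrite (perm_inj (val_inj wab)) eqxx.
Qed.

Lemma kascending_kdrop_left j i : kascending w k j i -> kdrop_left w k i.
Proof.
case=> ji mid jk _ s si wis; exists j; split; last by [].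
rewrite ji andbT leqNgt; apply/negP => js.
by have [_] := mid s ltac:(lia); lia.
Qed.

Lemma kascending_end_leq j i t :
  kdrop_right w k t -> kascending w k j i -> (j <= t)%N -> (i <= t)%N.
Proof.
move=> dropR [_ mid _ nodown] jt; rewrite leqNgt; apply/negP => ti.
have [_ wti] := mid t ltac:(lia).
have ti' : t != i by rewrite neq_ltn ti.
have [m [/andP[tm mi] drop]] := dropR i ti (perm_ltn_of_leq ti' wti).
by apply: nodown; exists t, m.
Qed.

Lemma kascending_extend j i t :
  kascending w k j i -> (i < t)%N -> (w i < w t)%N ->
  (forall m : 'I_n, (i < m < t)%N -> (w m < w i)%N) ->
  (forall m : 'I_n, (i < m <= t)%N -> (w i < w m + k)%N) ->
  kascending w k j t.
Proof.
move=> [ji mid jk nodown] it wit below nodrop; split.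
- lia.
- move=> m /andP[jm mt]; case: (leqP m i) => [mi|im].
    by have := mid m ltac:(lia); lia.
  case: (ltngtP m t) mt => // [mt' _|/ord_inj -> _]; last by lia.
  by have := below m ltac:(lia); have := nodrop m ltac:(lia); lia.
- lia.
- move=> [s [u [js [ut [su drop]]]]]; case: (leqP u i) => [ui|iu].
    by apply: nodown; exists s, u.
  have := nodrop u ltac:(lia); case: (leqP s i) => [si|is_].
    by have := mid s ltac:(lia); lia.
  by have := below s ltac:(lia); lia.
Qed.

Lemma max_kascending_kdrop_right j i : max_kascending w k j i -> kdrop_right w k i.
Proof.
move=> [asc maxi] s i_s wis.
case: (boolP [exists m : 'I_n, (i < m <= s) && (w m + k <= w i)]).
  by move=> /existsP[m /andP[m_s drop]]; exists m.
move=> /existsPn nodrop; exfalso.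
pose P (m : 'I_n) := (i < m) && (w i < w m).
case: (arg_minnP (fun m : 'I_n => nat_of_ord m) (introT andP (conj i_s wis) : P s)).
move=> t /andP[it wit] first_rise.
have ts : (t <= s)%N by apply: first_rise; apply/andP.
apply: maxi; exists j, t; split=> //; split; first exact: ltnW.
split; first by case=> ti; move: it; rewrite ti ltnn.
apply: (kascending_extend asc it wit) => [m /andP[im mt]|m /andP[im mt]].
  rewrite ltnNge; apply/negP => wim.
  have rise : P m by rewrite /P im (perm_ltn_of_leq _ wim) // neq_ltn im.
  by have := first_rise m rise; lia.
by have := nodrop m; rewrite im (leq_trans mt ts) /= -ltnNge.
Qed.

Lemma kascending_of_band j i :
  (j < i)%N -> (w j + k <= w i)%N ->
  (forall m : 'I_n, (j < m <= i)%N -> (w i < w m + k)%N /\ (w m <= w i)%N) ->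
  kascending w k j i.
Proof.
move=> ji jk band; split=> // [m /andP[jm mi]|[s [t [js [ti [st drop]]]]]].
  case: (ltngtP j m) jm => // [jm' _|/ord_inj <- _]; last by lia.
  by have := band m ltac:(lia); lia.
have [dropt _] := band t ltac:(lia).
move: drop; case: (ltngtP j s) js => // [js' _|/ord_inj <- _]; last by lia.
by have [_] := band s ltac:(lia); lia.
Qed.

Lemma exists_kascending_end i p :
  (0 < k)%N -> kdrop_left w k i -> (p < i)%N -> (w p + k <= w i)%N ->
  exists j, kascending w k j i.
Proof.
move=> k_gt0 dropL pi pk.
pose P (m : 'I_n) := (m < i) && (w m + k <= w i).
case: (arg_maxnP (fun m : 'I_n => nat_of_ord m) (introT andP (conj pi pk) : P p)).
move=> j /andP[ji jk] last_drop; exists j; apply: kascending_of_band => // m /andP[jm mi].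
have nodrop : (w i < w m + k)%N.
  case: (ltngtP m i) mi => // [mi' _|/ord_inj -> _]; last by lia.
  rewrite ltnNge; apply/negP => drop.
  by have := last_drop m (introT andP (conj mi' drop)); lia.
split=> //; rewrite leqNgt; apply/negP => wim.
have mi' : (m < i)%N by case: (ltngtP m i) mi wim => // /ord_inj ->; rewrite ltnn.
have [u [/andP[mu ui] drop]] := dropL m mi' wim.
by have := last_drop u (introT andP (conj ui drop)); lia.
Qed.

Lemma exists_max_kascending j i :
  kdrop_right w k i -> kascending w k j i -> exists j', max_kascending w k j' i.
Proof.
move=> dropR asc.
pose P m := exists a : 'I_n, a = m :> nat /\ kascending w k a i.
have [m0 [[[a [<- asc_a]] least] _]] : has_unique_least_element le P.
  apply: dec_inh_nat_subset_has_unique_least_element => [m|]; first exact: classic.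
  by exists j, j.
exists a; split=> // -[a' [b' [a'a [ib' [neq asc']]]]].
have [ai _ _ _] := asc_a.
have b'i : b' = i.
  apply/ord_inj/eqP; rewrite eqn_leq ib' (kascending_end_leq dropR asc') //.
  exact: leq_trans a'a (ltnW ai).
subst b'; have /leP aa' := least a' (ex_intro _ a' (conj erefl asc')).
by apply: neq; congr pair; apply/val_inj/eqP; rewrite eqn_leq aa' a'a.
Qed.

End Ascending.

Section Reversal.
Variable n : nat.
Implicit Types (w : 'S_n) (i j : 'I_n).

Definition reversal w : 'S_n := (perm (@rev_ord_inj n) * w)%g.

Lemma reversalE w i : reversal w i = w (rev_ord i).
Proof. by rewrite permM permE. Qed.

Lemma reversalK : involutive reversal.
Proof. by move=> w; apply/permP => i; rewrite !reversalE rev_ordK. Qed.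

Lemma leq_rev_ord i j : (rev_ord i <= rev_ord j)%N = (j <= i)%N.
Proof. by rewrite /= leq_sub2lE. Qed.

Lemma ltn_rev_ord i j : (rev_ord i < rev_ord j)%N = (j < i)%N.
Proof. by rewrite !ltnNge leq_rev_ord. Qed.

Lemma leq_rev_ordLR i j : (rev_ord i <= j)%N = (rev_ord j <= i)%N.
Proof. by rewrite -{1}(rev_ordK j) leq_rev_ord. Qed.

Lemma leq_rev_ordRL i j : (i <= rev_ord j)%N = (j <= rev_ord i)%N.
Proof. by rewrite -{1}(rev_ordK i) leq_rev_ord. Qed.

Lemma ltn_rev_ordRL i j : (i < rev_ord j)%N = (j < rev_ord i)%N.
Proof. by rewrite -{1}(rev_ordK i) ltn_rev_ord. Qed.

Variable k : nat.

Lemma kascending_reversal w j i :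
  kascending (reversal w) k j i <-> kdescending w k (rev_ord i) (rev_ord j).
Proof.
rewrite /kascending /kdescending /kup /kdown !reversalE ltn_rev_ord.
split=> -[ji mid jk noslope]; split=> // [m|[s [t [st [tt [lt drop]]]]]].
- rewrite -[m]rev_ordK !leq_rev_ord andbC -[w (rev_ord (rev_ord m))]reversalE; exact: mid.
- apply: noslope; exists (rev_ord t), (rev_ord s).
  by rewrite leq_rev_ordRL leq_rev_ordLR ltn_rev_ord !reversalE !rev_ordK.
- rewrite reversalE -[j <= m]leq_rev_ord -[m <= i]leq_rev_ord andbC => mm.
  exact: mid.
- apply: noslope; exists (rev_ord t), (rev_ord s).
  by rewrite !leq_rev_ord ltn_rev_ord -!reversalE.
Qed.

Lemma max_kascending_reversal w j i :
  max_kascending (reversal w) k j i <-> max_kdescending w k (rev_ord i) (rev_ord j).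
Proof.
rewrite /max_kascending /max_kdescending kascending_reversal.
split=> -[desc nobig]; split=> // -[a [b [ai [jb [ne big]]]]]; apply: nobig.
- exists (rev_ord b), (rev_ord a).
  rewrite leq_rev_ordLR leq_rev_ordRL kascending_reversal !rev_ordK; do !split => //.
  by case=> eb ea; apply: ne; rewrite -eb -ea !rev_ordK.
- exists (rev_ord b), (rev_ord a).
  rewrite !leq_rev_ord -kascending_reversal; do !split => //.
  by apply/eqP; move/eqP: ne; rewrite !xpair_eqE !(inj_eq rev_ord_inj) andbC.
Qed.

Lemma kdrop_right_reversal w i :
  kdrop_right (reversal w) k i <-> kdrop_left w k (rev_ord i).
Proof.
split=> drop s.
- move=> si wis.
  have [||j [/andP[ij js] jk]] := drop (rev_ord s).
  + by rewrite ltn_rev_ordRL.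
  + by rewrite !reversalE rev_ordK.
  exists (rev_ord j); rewrite -leq_rev_ordRL ltn_rev_ord ij js.
  by rewrite !reversalE in jk.
- move=> is_ wis.
  have [||j [/andP[sj ji] jk]] := drop (rev_ord s).
  + by rewrite ltn_rev_ord.
  + by rewrite -!reversalE.
  by exists (rev_ord j); rewrite ltn_rev_ordRL -leq_rev_ordLR ji sj !reversalE rev_ordK.
Qed.

Lemma kdrop_left_reversal w i :
  kdrop_left (reversal w) k i <-> kdrop_right w k (rev_ord i).
Proof. by rewrite -[i]rev_ordK -kdrop_right_reversal reversalK rev_ordK. Qed.

End Reversal.

Section KPeakCharacterization.
Variables (n : nat) (w : 'S_n) (k : nat).
Implicit Types (i p : 'I_n).

Lemma kpeak_kdrop i : kpeak w k i -> kdrop_right w k i /\ kdrop_left w k i.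
Proof.
case=> [[j asc]|[j desc]].
  by split; [exact: max_kascending_kdrop_right asc | exact: kascending_kdrop_left asc.1].
rewrite -[i]rev_ordK -[j]rev_ordK -max_kascending_reversal in desc.
have := max_kascending_kdrop_right desc; rewrite kdrop_right_reversal rev_ordK => dropL.
by have := kascending_kdrop_left desc.1; rewrite kdrop_left_reversal rev_ordK.
Qed.

Lemma kdrop_kpeak i p :
  (0 < k)%N -> kdrop_right w k i -> kdrop_left w k i -> p != i -> (w p + k <= w i)%N ->
  kpeak w k i.
Proof.
move=> k_gt0 dropR dropL.
case: (ltngtP p i) => [pi _ drop|ip _ drop|/ord_inj->]; last by rewrite eqxx.
  left; have [j asc] := exists_kascending_end k_gt0 dropL pi drop.
  exact: exists_max_kascending dropR asc.
right; rewrite -[i]rev_ordK -kdrop_left_reversal in dropR.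
rewrite -[i]rev_ordK -kdrop_right_reversal in dropL.
have ip' : (rev_ord p < rev_ord i)%N by rewrite ltn_rev_ord.
have drop' : (reversal w (rev_ord p) + k <= reversal w (rev_ord i))%N.
  by rewrite !reversalE !rev_ordK.
have [j asc] := exists_kascending_end k_gt0 dropR ip' drop'.
have [j' max_asc] := exists_max_kascending dropL asc.
by exists (rev_ord j'); rewrite -[i]rev_ordK -max_kascending_reversal.
Qed.

Lemma exists_kdrop_entry i :
  (0 < k <= n - 1)%N -> kdrop_right w k i -> kdrop_left w k i ->
  exists2 p, p != i & (w p + k <= w i)%N.
Proof.
move=> /andP[k_gt0 kn] dropR dropL.
have top_lt : (n.-1 < n)%N by lia.
pose top := (w^-1)%g (Ordinal top_lt).
have wtop : w top = n.-1 :> nat by rewrite permKV.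
case: (eqVneq top i) => [<-|top_i].
  have bot_lt : (0 < n)%N by lia.
  pose bot := (w^-1)%g (Ordinal bot_lt).
  have wbot : w bot = 0 :> nat by rewrite permKV.
  exists bot; last by rewrite wbot wtop; lia.
  by apply/eqP => bot_top; move: wbot; rewrite bot_top wtop; lia.
have wi_top : (w i < w top)%N.
  by apply: perm_ltn_of_leq; rewrite 1?eq_sym // wtop; have := ltn_ord (w i); lia.
have [j drop] : exists j, (w j + k <= w i)%N.
  case: (ltngtP i top) top_i => [it|ti|/ord_inj->]; last by rewrite eqxx.
  + by have [j [_ ?]] := dropR top it wi_top; exists j.
  + by have [j [_ ?]] := dropL top ti wi_top; exists j.
by exists j => //; apply/eqP => ji; move: drop; rewrite ji; lia.
Qed.

End KPeakCharacterization.

Theorem proposition3p1 (n : nat) (hn : (2 <= n)%N) (w : 'S_n) (i : 'I_n)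
    (k : nat) (hk : (1 <= k <= n - 1)%N) :
  kpeak w k i <->
  ((forall s : 'I_n, (i < s)%N -> (w i < w s)%N ->
      exists j : 'I_n, (i < j <= s)%N /\ (w j + k <= w i)%N) /\
   (forall s : 'I_n, (s < i)%N -> (w i < w s)%N ->
      exists j : 'I_n, (s <= j < i)%N /\ (w j + k <= w i)%N)).
Proof.
(* [hn] is implied by [hk]. *)
split=> [|[dropR dropL]]; first exact: kpeak_kdrop.
have [p pi drop] := exists_kdrop_entry hk dropR dropL.
have /andP[k_gt0 _] := hk.
exact: kdrop_kpeak k_gt0 dropR dropL pi drop.
Qed.
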